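(* Let $k$ be a field of prime characteristic $p$, and let $V_1,V_2,\ldots$ be a sequence of $T$-spaces of $k_0\langle X\rangle$ such that (a) $(V_iV_j)^S=V_{i+j}$ for all $i,j\ge1$, and (b) $V_{2m+1}\subseteq V_{m+1}+V_1$ for all $m\ge1$. Then for any integers $r,s$ with $0<r<s$, we have $V_{s+t(s-r)}\subseteq V_r+V_s$ for all integers $t\ge0$.
   Context: $X=\{x_1,x_2,\ldots\}$ is a countably infinite set and $k_0\langle X\rangle$ denotes the free associative (non-unital) $k$-algebra on $X$. A $T$-space is a $k$-subspace of $k_0\langle X\rangle$ invariant under every algebra endomorphism of $k_0\langle X\rangle$ (i.e. closed under substitution of arbitrary elements of $k_0\langle X\rangle$ for the variables). For a subset $A$, $A^S$ (or $(A)^S$) denotes the $T$-space generated by $A$. For subsets $A,B$, $AB$ denotes the set of products $\{ab: a\in A, b\in B\}$. Sums of $T$-spaces are sums of subspaces. *)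

From HB Require Import structures.
From mathcomp Require Import all_boot all_algebra.
From mathcomp Require Import finmap.
From mathcomp.multinomials Require Import monalg.
Set Implicit Arguments.
Unset Strict Implicit.
Unset Printing Implicit Defensive.
Import GRing.Theory.
Local Open Scope ring_scope.

(* The free associative unital algebra k<X> on X = {x_0, x_1, ...}:
   finitely supported k-linear combinations of words over nat
   (free monoid {fmonom nat}, multiplication = concatenation). *)
Definition kX (k : fieldType) := {malg k[{fmonom nat}]}.

Definition word1 : {fmonom nat} := mone.

(* k_0<X>: the non-unital free algebra = elements with zero constant term. *)
Definition nonunital (k : fieldType) (f : kX k) : Prop := f@_word1 = 0.

Definition subst (k : fieldType) (sigma : nat -> kX k) (f : kX k) : kX k :=
  \sum_(m <- msupp f) f@_m *: \prod_(i <- fmonom_val m) sigma i.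

Definition subspace (k : fieldType) (V : kX k -> Prop) : Prop :=
  [/\ forall f, V f -> nonunital f,
      V 0,
      forall f g, V f -> V g -> V (f + g) &
      forall (c : k) f, V f -> V (c *: f)].

(* T-space: subspace of k_0<X> closed under every endomorphism of k_0<X>,
   i.e. under substitution of arbitrary elements of k_0<X> for the variables. *)
Definition Tspace (k : fieldType) (V : kX k -> Prop) : Prop :=
  subspace V /\
  forall sigma : nat -> kX k, (forall i, nonunital (sigma i)) ->
    forall f, V f -> V (subst sigma f).

(* (A)^S: the T-space generated by A (intersection of all T-spaces containing A). *)
Definition Tgen (k : fieldType) (A : kX k -> Prop) : kX k -> Prop :=
  fun f => forall W, Tspace W -> (forall g, A g -> W g) -> W f.

Definition prodset (k : fieldType) (A B : kX k -> Prop) : kX k -> Prop :=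
  fun f => exists a b, [/\ A a, B b & f = a * b].

Definition sumset (k : fieldType) (A B : kX k -> Prop) : kX k -> Prop :=
  fun f => exists a b, [/\ A a, B b & f = a + b].

Definition Tsubset (k : fieldType) (A B : kX k -> Prop) : Prop :=
  forall f, A f -> B f.

(* Writing [a_n = r + n (s - r)], every [V a_(n+2)] lies in [V a_(n+1) + V a_n]: for
   [x >= 2], hypothesis (a) writes [V (x + 2m)] as the T-space generated by
   [V (2m+1) V (x-1)], and (b) pushes this product into [V (x+m) + V x], itself a
   T-space; for [x = 1] this is (b).  Since [a_0 = r] and [a_1 = s], induction puts
   every [V a_n] inside [V r + V s]. *)
From mathcomp Require Import all_boot all_algebra.
From mathcomp Require Import finmap.
From mathcomp.multinomials Require Import monalg.
From mathcomp Require Import zify.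
Local Open Scope ring_scope.
Import GRing.Theory.

Section TspaceSum.
Variable k : fieldType.

Lemma subst_supp (sigma : nat -> kX k) (f : kX k) (d : {fset {fmonom nat}}) :
  (msupp f `<=` d)%fset ->
  subst sigma f = \sum_(m <- d) f@_m *: \prod_(i <- fmonom_val m) sigma i.
Proof.
move=> le_fd; rewrite /subst [LHS](big_fset_incl _ le_fd) => //= m _ /mcoeff_outdom ->.
by rewrite scale0r.
Qed.

Lemma substD (sigma : nat -> kX k) (a b : kX k) :
  subst sigma (a + b) = subst sigma a + subst sigma b.
Proof.
rewrite (subst_supp sigma _ _ (msuppD_le a b)).
rewrite (subst_supp sigma _ _ (fsubsetUl _ (msupp b))).
rewrite (subst_supp sigma _ _ (fsubsetUr (msupp a) _)) -big_split /=.
by apply: eq_bigr => m _; rewrite mcoeffD scalerDl.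
Qed.

Lemma Tspace_sumset (A B : kX k -> Prop) :
  Tspace A -> Tspace B -> Tspace (sumset A B).
Proof.
move=> [[A_nu A0 AD AZ] A_subst] [[B_nu B0 BD BZ] B_subst]; split; first split.
- move=> _ [a [b [Aa Bb ->]]].
  by rewrite /nonunital mcoeffD (A_nu _ Aa) (B_nu _ Bb) addr0.
- by exists 0, 0; rewrite addr0.
- move=> _ _ [a [b [Aa Bb ->]]] [a' [b' [Aa' Bb' ->]]].
  by exists (a + a'), (b + b'); rewrite addrACA; split; [apply: AD | apply: BD |].
- move=> c _ [a [b [Aa Bb ->]]].
  by exists (c *: a), (c *: b); rewrite scalerDr; split; [apply: AZ | apply: BZ |].
- move=> sigma sigma_nu _ [a [b [Aa Bb ->]]].
  by exists (subst sigma a), (subst sigma b); rewrite substD;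
    split; [apply: A_subst | apply: B_subst |].
Qed.

Lemma sumsetl (A B : kX k -> Prop) : subspace B -> Tsubset A (sumset A B).
Proof. by case=> _ B0 _ _ f Af; exists f, 0; rewrite addr0. Qed.

Lemma sumsetr (A B : kX k -> Prop) : subspace A -> Tsubset B (sumset A B).
Proof. by case=> _ A0 _ _ f Bf; exists 0, f; rewrite add0r. Qed.

Lemma Tgen_sub (A : kX k -> Prop) : Tsubset A (Tgen A).
Proof. by move=> f Af W _; apply. Qed.

Lemma Tgen_min (A W : kX k -> Prop) :
  Tspace W -> Tsubset A W -> Tsubset (Tgen A) W.
Proof. by move=> TW AW f; apply. Qed.

End TspaceSum.

Section GradedTspaces.
Variables (k : fieldType) (V : nat -> kX k -> Prop).
Hypothesis V_Tspace : forall i, (1 <= i)%N -> Tspace (V i).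
Hypothesis V_prod : forall i j, (1 <= i)%N -> (1 <= j)%N ->
  forall f, Tgen (prodset (V i) (V j)) f <-> V (i + j)%N f.
Hypothesis V_odd : forall m, (1 <= m)%N ->
  Tsubset (V (2 * m + 1)%N) (sumset (V (m + 1)%N) (V 1%N)).

Lemma V_mul i j a b : (1 <= i)%N -> (1 <= j)%N ->
  V i a -> V j b -> V (i + j)%N (a * b).
Proof.
move=> i_gt0 j_gt0 Va Vb; apply: (V_prod _ _ i_gt0 j_gt0 (a * b)).1; apply: Tgen_sub.
by exists a, b.
Qed.

Lemma V_split x m : (1 <= x)%N -> (1 <= m)%N ->
  Tsubset (V (x + 2 * m)%N) (sumset (V (x + m)%N) (V x)).
Proof.
move=> x_gt0 m_gt0; case: (ltnP 1 x) => [x_gt1 | x_le1]; last first.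
  have -> : x = 1%N by lia.
  by rewrite addnC (addnC 1%N); apply: V_odd.
have y_gt0 : (1 <= x - 1)%N by lia.
have -> : (x + 2 * m = (2 * m + 1) + (x - 1))%N by lia.
have odd_gt0 : (1 <= 2 * m + 1)%N by rewrite addn1.
move=> f /(V_prod _ _ odd_gt0 y_gt0 f); apply: Tgen_min.
  by apply: Tspace_sumset; apply: V_Tspace; lia.
move=> _ [a [b [Va Vb ->]]]; have [u [v [Vu Vv ->]]] := V_odd _ m_gt0 _ Va.
exists (u * b), (v * b); rewrite mulrDl; split=> //.
- have -> : (x + m = (m + 1) + (x - 1))%N by lia.
  by apply: V_mul => //; lia.
- have -> : x = (1 + (x - 1))%N by lia.
  exact: V_mul.
Qed.

Lemma V_arith_progression x d : (1 <= x)%N -> (1 <= d)%N ->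
  forall n, Tsubset (V (x + n * d)%N) (sumset (V x) (V (x + d)%N)).
Proof.
move=> x_gt0 d_gt0; have xd_gt0 : (1 <= x + d)%N by lia.
have [[_ _ WD _] _] : Tspace (sumset (V x) (V (x + d)%N)).
  by apply: Tspace_sumset; apply: V_Tspace.
suff two_terms n : Tsubset (V (x + n * d)%N) (sumset (V x) (V (x + d)%N)) /\
                   Tsubset (V (x + n.+1 * d)%N) (sumset (V x) (V (x + d)%N)).
  by move=> n; case: (two_terms n).
elim: n => [|n [IHn IHn1]].
  rewrite mul0n mul1n addn0; split.
  - by apply: sumsetl; case: (V_Tspace _ xd_gt0).
  - by apply: sumsetr; case: (V_Tspace _ x_gt0).
split=> // f; have -> : (x + n.+2 * d = (x + n * d) + 2 * d)%N by lia.
have xn_gt0 : (1 <= x + n * d)%N by lia.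
move=> /(V_split _ _ xn_gt0 d_gt0 f) [a [b [Va Vb ->]]].
rewrite -addnA -mulSnr in Va.
by apply: WD; [exact: IHn1 | exact: IHn].
Qed.

End GradedTspaces.

Theorem lemma2p1 (k : fieldType) (p : nat) (hp : prime p)
  (hchar : p \in [pchar k]) (V : nat -> kX k -> Prop)
  (hT : forall i, (1 <= i)%N -> Tspace (V i))
  (ha : forall i j, (1 <= i)%N -> (1 <= j)%N ->
        forall f, Tgen (prodset (V i) (V j)) f <-> V (i + j)%N f)
  (hb : forall m, (1 <= m)%N -> Tsubset (V (2 * m + 1)%N) (sumset (V (m + 1)%N) (V 1%N))) :
  forall r s : nat, (0 < r)%N -> (r < s)%N ->
  forall t : nat, Tsubset (V (s + t * (s - r))%N) (sumset (V r) (V s)).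
Proof.
move=> r s r_gt0 lt_rs t.
have -> : (s + t * (s - r) = r + t.+1 * (s - r))%N by lia.
have {2}-> : s = (r + (s - r))%N by lia.
by apply: (@V_arith_progression k V hT ha hb) => //; lia.
Qed.
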